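(* Let $A$ be an infinite set, fix $z\in A$, $A'=A\setminus\{z\}$, and $p\in[1,\infty)$. The map $p_p:N(A)\to l^p(A)$ is continuous.
   Context: $l^p(A)$ is the set of families $x=(x_a)_{a\in A'}$ of real numbers with $x_a=0$ for all but countably many $a$ and $\sum_a|x_a|^p<\infty$, with metric $d_p(x,y)=(\sum_a|x_a-y_a|^p)^{1/p}$. $N(A)$ is the set of all sequences $\alpha=a_1a_2a_3\ldots$ with $a_k\in A$, with metric $d(v,v')=1/k$ where $k$ is the first index at which $v,v'$ differ, and $d(v,v)=0$. The map $p_p$ is $p_p(\alpha)=(\alpha_b)_{b\in A'}$ where, for $\alpha=a_1a_2\ldots$, $\alpha_b=\sum_{k:\,a_k=b}2^{-k}$ (and $\alpha_b=0$ if no $a_k$ equals $b$). *)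

From HB Require Import structures.
From mathcomp Require Import all_boot all_order all_algebra.
From mathcomp Require Import all_classical all_reals all_analysis.
Set Implicit Arguments. Unset Strict Implicit. Unset Printing Implicit Defensive.
Import Order.TTheory GRing.Theory Num.Theory.
Local Open Scope classical_set_scope.
Local Open Scope ring_scope.

(* Families indexed by A' = A \ {z} are represented as functions A -> R whose
   value at z is irrelevant (all notions below only look at A'). *)
Definition Aprime (A : Type) (z : A) : set A := ~` [set z].

Definition lp_sum (R : realType) (A : choiceType) (z : A) (p : R)
  (x y : A -> R) : \bar R :=
  (\esum_(a in Aprime z) ((`|x a - y a| `^ p)%:E))%E.

Definition in_lp (R : realType) (A : choiceType) (z : A) (p : R)
  (x : A -> R) : Prop :=
  countable [set a | Aprime z a /\ x a != 0] /\
  (lp_sum z p x (fun=> 0%R) < +oo)%E.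

Definition d_p (R : realType) (A : choiceType) (z : A) (p : R)
  (x y : A -> R) : R :=
  (fine (lp_sum z p x y)) `^ p^-1.

(* N(A): sequences a_1 a_2 ... ; a_k is v (k-1) *)
Lemma exists_asbool_diff (A : Type) (v w : nat -> A) :
  (exists n, v n <> w n) -> exists n, `[< v n <> w n >].
Proof. by case=> n H; exists n; apply/asboolP. Qed.

Definition dN (R : realType) (A : Type) (v w : nat -> A) : R :=
  match pselect (exists n, v n <> w n) with
  | left H => ((ex_minn (exists_asbool_diff H)).+1%:R)^-1
  | right _ => 0
  end.

Definition pp_map (R : realType) (A : choiceType) (alpha : nat -> A) (b : A) : R :=
  limn (fun n => \sum_(0 <= k < n | alpha k == b) ((2 : R) ^- k.+1)).
Arguments pp_map R {A} alpha b.
Arguments dN R {A} v w.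

From HB Require Import structures.
From mathcomp Require Import all_boot all_order all_algebra.
From mathcomp Require Import all_classical all_reals all_analysis.
From mathcomp Require Import lra.
Import Order.TTheory GRing.Theory Num.Theory.
Import numFieldNormedType.Exports.
Local Open Scope classical_set_scope.
Local Open Scope ring_scope.

(* Each index k of alpha contributes its weight 2^-(k+1) to exactly one
   coordinate of p_p(alpha), so every finite family of coordinates sums to at
   most 1.  If alpha and beta agree on their first M terms, only the weights
   with k >= M can differ, hence the l^1 distance of p_p(alpha) and p_p(beta)
   is at most 2 * 2^-M.  All coordinates lie in [0, 1] and |t|^p <= |t| there,
   so l^p sums are bounded by l^1 sums; this gives both membership in l^p and
   continuity. *)

Section Dyadic.
Variable R : realType.

Definition dyadic (k : nat) : R := 2 ^- k.+1.

Definition dyadic_tail (N k : nat) : R := if (N <= k)%N then dyadic k else 0.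

Lemma dyadic_ge0 k : 0 <= dyadic k.
Proof. by rewrite invr_ge0 exprn_ge0. Qed.

Lemma dyadic_tail_ge0 N k : 0 <= dyadic_tail N k.
Proof. by rewrite /dyadic_tail; case: ifP => // _; exact: dyadic_ge0. Qed.

Lemma sum_dyadic_tail N n :
  \sum_(0 <= k < n) dyadic_tail N k = 2 ^- N - 2 ^- maxn n N.
Proof.
elim: n => [|n IH]; first by rewrite big_nil max0n subrr.
rewrite big_nat_recr //= IH /dyadic_tail.
case: (leqP N n) => [Nn|nN]; last by rewrite addr0 !(maxn_idPr _) // ltnW.
rewrite !(maxn_idPl _) ?(leqW Nn) // /dyadic exprS invfM.
have : 0 < 2 ^- n :> R by rewrite invr_gt0 exprn_gt0.
by lra.
Qed.

Lemma sum_dyadic_tail_le N n : \sum_(0 <= k < n) dyadic_tail N k <= 2 ^- N.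
Proof. by rewrite sum_dyadic_tail gerBl invr_ge0 exprn_ge0. Qed.

Lemma sum_dyadic_le1 n : \sum_(0 <= k < n) dyadic k <= 1.
Proof. by have := sum_dyadic_tail_le 0 n; rewrite expr0 invr1. Qed.

Lemma exists_dyadic_lt (t : R) : 0 < t -> exists M, 2 * 2 ^- M < t.
Proof.
move=> t0; pose M := (Num.Def.trunc (2 / t)).+1; exists M.
have M_gt : 2 / t < M%:R := truncnS_gt _.
have M_lt : M%:R < 2 ^+ M :> R by rewrite -natrX ltr_nat ltn_expl.
have := lt_trans M_gt M_lt.
by rewrite ltr_pdivrMr // ltr_pdivrMr ?exprn_gt0 // mulrC.
Qed.

End Dyadic.

Section FiberSums.
Context {R : realType} {A : eqType}.
Implicit Types (c : nat -> R) (alpha beta : nat -> A).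

Definition fiber_sum c alpha (a : A) (n : nat) : R :=
  \sum_(0 <= k < n | alpha k == a) c k.

Lemma sum_fiber_sum_le c alpha (s : seq A) n : uniq s -> (forall k, 0 <= c k) ->
  \sum_(a <- s) fiber_sum c alpha a n <= \sum_(0 <= k < n) c k.
Proof.
move=> s_uniq c_ge0; rewrite /fiber_sum.
under eq_bigr => a _ do rewrite big_mkcond /=.
rewrite exchange_big /=; apply: ler_sum => k _.
rewrite -big_mkcond /=; under eq_bigl => a do rewrite eq_sym.
rewrite -big_filter; have [ks|kNs] := boolP (alpha k \in s).
  by rewrite (filter_pred1_uniq s_uniq ks) big_seq1.
suff -> : [seq a <- s | a == alpha k] = [::] by rewrite big_nil.
by apply/eqP; rewrite -[_ == _]negbK -has_filter has_pred1.
Qed.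

Lemma fiber_sum_ge0 c alpha a n :
  (forall k, 0 <= c k) -> 0 <= fiber_sum c alpha a n.
Proof. by move=> c_ge0; apply: sumr_ge0. Qed.

Lemma fiber_sum_le c alpha a n : (forall k, 0 <= c k) ->
  fiber_sum c alpha a n <= \sum_(0 <= k < n) c k.
Proof.
move=> c_ge0; have := @sum_fiber_sum_le c alpha [:: a] n erefl c_ge0.
by rewrite big_seq1.
Qed.

Lemma fiber_sum_nondecreasing c alpha a : (forall k, 0 <= c k) ->
  nondecreasing_seq (fiber_sum c alpha a).
Proof.
move=> c_ge0 n m nm; rewrite /fiber_sum (big_cat_nat (leq0n n) nm) /= lerDl.
exact: sumr_ge0.
Qed.

Lemma fiber_sum_dist_le alpha beta N a n :
  (forall k, (k < N)%N -> alpha k = beta k) ->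
  `|fiber_sum (dyadic R) alpha a n - fiber_sum (dyadic R) beta a n| <=
    fiber_sum (dyadic_tail R N) alpha a n + fiber_sum (dyadic_tail R N) beta a n.
Proof.
move=> agree; rewrite /fiber_sum !(big_mkcond (fun k => _ == a)) -sumrB -big_split.
apply: le_trans (ler_norm_sum _ _ _) _; apply: ler_sum => k _ /=.
rewrite /dyadic_tail; case: (ltnP k N) => [/agree ->|_].
  by rewrite subrr normr0; case: ifP => _; rewrite ?addr0.
have w_ge0 := dyadic_ge0 R k.
by case: ifP => _; case: ifP => _;
  rewrite ?subrr ?subr0 ?sub0r ?normrN ?normr0 ?ger0_norm //; lra.
Qed.

End FiberSums.

Lemma big_cvg_le (R : realType) (I : Type) (s : seq I) (u : I -> nat -> R)
    (l : I -> R) (C : R) :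
  (forall i, u i n @[n --> \oo] --> l i) ->
  (forall n, \sum_(i <- s) u i n <= C) -> \sum_(i <- s) l i <= C.
Proof.
move=> u_cvg u_le.
have sum_cvg : \sum_(i <- s) u i n @[n --> \oo] --> \sum_(i <- s) l i.
  by apply: cvg_big => //; exact: add_continuous.
by apply: (cvgr_to_le sum_cvg); exact: nearW.
Qed.

Section DyadicCoordinates.
Context {R : realType} {A : choiceType}.
Implicit Types (alpha beta : nat -> A) (a : A).

Lemma fiber_sum_dyadic_le1 alpha a n : fiber_sum (dyadic R) alpha a n <= 1.
Proof.
exact: le_trans (fiber_sum_le _ alpha a n (dyadic_ge0 R)) (sum_dyadic_le1 R n).
Qed.

Lemma pp_map_cvg alpha a :
  fiber_sum (dyadic R) alpha a n @[n --> \oo] --> pp_map R alpha a.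
Proof.
apply: nondecreasing_is_cvgn; first exact: fiber_sum_nondecreasing (dyadic_ge0 R).
by exists 1 => _ [n _ <-]; exact: fiber_sum_dyadic_le1.
Qed.

Lemma pp_map_ge0 alpha a : 0 <= pp_map R alpha a.
Proof.
apply: cvgr_to_ge (pp_map_cvg alpha a) _.
by apply: nearW => n; exact: fiber_sum_ge0 (dyadic_ge0 R).
Qed.

Lemma pp_map_le1 alpha a : pp_map R alpha a <= 1.
Proof.
apply: cvgr_to_le (pp_map_cvg alpha a) _.
by apply: nearW => n; exact: fiber_sum_dyadic_le1.
Qed.

Lemma pp_map_eq0 alpha a : ~ range alpha a -> pp_map R alpha a = 0.
Proof.
move=> a_notin; rewrite /pp_map (_ : (fun n => _) = fun=> 0) ?lim_cst //.
by apply: funext => n; rewrite big1 // => k /eqP ka; case: a_notin; exists k.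
Qed.

Lemma sum_pp_map_le1 alpha (s : seq A) :
  uniq s -> \sum_(a <- s) pp_map R alpha a <= 1.
Proof.
move=> s_uniq; apply: big_cvg_le (pp_map_cvg alpha) _ => n.
exact: le_trans (sum_fiber_sum_le _ alpha s n s_uniq (dyadic_ge0 R))
  (sum_dyadic_le1 R n).
Qed.

Lemma sum_dist_pp_map_le alpha beta M (s : seq A) :
  (forall k, (k < M)%N -> alpha k = beta k) -> uniq s ->
  \sum_(a <- s) `|pp_map R alpha a - pp_map R beta a| <= 2 * 2 ^- M.
Proof.
move=> agree s_uniq.
pose dist a n := `|fiber_sum (dyadic R) alpha a n - fiber_sum (dyadic R) beta a n|.
apply: (@big_cvg_le _ _ _ dist) => [a|n].
  by apply: cvg_norm; apply: cvgB; exact: pp_map_cvg.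
pose tail gamma a := fiber_sum (dyadic_tail R M) gamma a n.
apply: (@le_trans _ _ (\sum_(a <- s) (tail alpha a + tail beta a))).
  by apply: ler_sum => a _; exact: fiber_sum_dist_le.
rewrite big_split /= mulr_natl mulr2n.
have tail_le gamma :=
  le_trans (sum_fiber_sum_le _ gamma s n s_uniq (dyadic_tail_ge0 R M))
    (sum_dyadic_tail_le R M n).
exact: lerD (tail_le alpha) (tail_le beta).
Qed.

End DyadicCoordinates.

Lemma countable_pp_map_support (R : realType) (A : choiceType) (alpha : nat -> A)
    (D : set A) :
  countable [set a | D a /\ pp_map R alpha a != 0].
Proof.
apply: (sub_countable (subset_card_le (B := range alpha) _)).
  by move=> a [_]; apply: contraNP => /(pp_map_eq0 alpha a) ->.
exact: card_le_trans (card_image_le alpha setT) (countableP _).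
Qed.

Section LpBounds.
Context {R : realType}.

Lemma esum_le_fin (T : choiceType) (D : set T) (f : T -> R) (C : R) :
  (forall s : seq T, uniq s -> \sum_(a <- s) f a <= C) ->
  (\esum_(a in D) (f a)%:E <= C%:E)%E.
Proof.
move=> f_le; apply: ge_ereal_sup => _ [X [finX _] <-].
rewrite fsbig_finite //= sumEFin lee_fin; apply: f_le.
exact: finmap.fset_uniq.
Qed.

Lemma powR_le_self (t q : R) : 0 <= t <= 1 -> 1 <= q -> t `^ q <= t.
Proof.
move=> /andP[t_ge0 t_le1] q_ge1; have [->|t_neq0] := eqVneq t 0.
  by rewrite powR0 // gt_eqF // (lt_le_trans ltr01 q_ge1).
by apply: ge1r_powR => //; rewrite t_le1 andbT lt_def t_neq0.
Qed.

Lemma lp_sum_le_l1 (A : choiceType) (z : A) (p : R) (x y : A -> R) (C : R) :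
  1 <= p -> (forall a, `|x a - y a| <= 1) ->
  (forall s : seq A, uniq s -> \sum_(a <- s) `|x a - y a| <= C) ->
  (lp_sum z p x y <= C%:E)%E.
Proof.
move=> p_ge1 xy_le1 l1_le; apply: esum_le_fin => s s_uniq.
apply: le_trans (l1_le s s_uniq); apply: ler_sum => a _.
by apply: powR_le_self => //; rewrite normr_ge0 xy_le1.
Qed.

Lemma d_p_lt {A : choiceType} {z : A} {p : R} {x y : A -> R} {r eps : R} :
  0 < p -> 0 < eps -> (lp_sum z p x y <= r%:E)%E -> r < eps `^ p ->
  d_p z p x y < eps.
Proof.
move=> p_gt0 eps_gt0 + r_lt; rewrite /d_p.
have : (0 <= lp_sum z p x y)%E by apply: esum_ge0 => a _; rewrite lee_fin powR_ge0.
case: (lp_sum z p x y) => [s| |] //=; rewrite !lee_fin => s_ge0 s_le.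
have -> : eps = (eps `^ p) `^ p^-1 by rewrite -powRrM mulfV ?gt_eqF // powRr1 ?ltW.
by apply: gt0_ltr_powR; rewrite ?invr_gt0 ?nnegrE ?powR_ge0 //; exact: le_lt_trans r_lt.
Qed.

End LpBounds.

Lemma dN_lt_agree (R : realType) (A : Type) (alpha beta : nat -> A) (M : nat) :
  dN R alpha beta < M.+1%:R^-1 -> forall k, (k < M)%N -> alpha k = beta k.
Proof.
move=> + k k_lt; have [//|ab_neq] := pselect (alpha k = beta k); rewrite /dN.
case: pselect => [differ|]; last by case; exists k.
case: ex_minnP => m _ m_min; rewrite ltf_pV2 ?posrE ?ltr0n // ltr_nat.
by rewrite ltnS ltnNge (leq_trans (m_min k (asboolT ab_neq)) (ltnW k_lt)).
Qed.

Section DyadicMap.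
Context {R : realType} {A : choiceType} (z : A) {p : R}.
Hypothesis p_ge1 : 1 <= p.

Lemma pp_map_in_lp (alpha : nat -> A) : in_lp z p (pp_map R alpha).
Proof.
split; first exact: countable_pp_map_support.
apply: le_lt_trans (ltry 1); apply: lp_sum_le_l1 => // [a|s s_uniq].
  by rewrite subr0 ger0_norm ?pp_map_ge0 ?pp_map_le1.
apply: le_trans (sum_pp_map_le1 alpha s s_uniq); apply: ler_sum => a _.
by rewrite subr0 ger0_norm ?pp_map_ge0.
Qed.

Lemma lp_sum_pp_map_le {alpha beta : nat -> A} {M : nat} :
  (forall k, (k < M)%N -> alpha k = beta k) ->
  (lp_sum z p (pp_map R alpha) (pp_map R beta) <= (2 * 2 ^- M)%:E)%E.
Proof.
move=> agree; apply: lp_sum_le_l1 => // [a|s]; last exact: sum_dist_pp_map_le.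
have := @pp_map_ge0 R _ alpha a; have := @pp_map_le1 R _ alpha a.
have := @pp_map_ge0 R _ beta a; have := @pp_map_le1 R _ beta a.
by rewrite ler_norml => *; apply/andP; split; lra.
Qed.

End DyadicMap.

Theorem proposition3p2 (R : realType) (A : choiceType) (z : A) (p : R) :
  infinite_set [set: A] -> 1 <= p ->
  (forall alpha : nat -> A, in_lp z p (pp_map R alpha)) /\
  (forall alpha : nat -> A, forall eps : R, 0 < eps ->
     exists2 delta : R, 0 < delta &
       forall beta : nat -> A, dN R alpha beta < delta ->
         d_p z p (pp_map R alpha) (pp_map R beta) < eps).
Proof.
move=> _ p_ge1; split=> [alpha|alpha eps eps_gt0]; first exact: pp_map_in_lp.
have p_gt0 : 0 < p := lt_le_trans ltr01 p_ge1.
have [M M_lt] := @exists_dyadic_lt R _ (powR_gt0 p eps_gt0).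
exists M.+1%:R^-1 => [|beta /dN_lt_agree agree]; first by rewrite invr_gt0 ltr0n.
apply: (d_p_lt p_gt0 eps_gt0 _ M_lt).
exact: (lp_sum_pp_map_le z p_ge1 agree).
Qed.
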